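(* Let $\alpha>0$ be a constant and let $n$ be an integer with $n\ge 10+4\alpha$. Then the solution curve of the generalized Gelfand problem \[ u''+\frac{n-1}{r}u'+\lambda r^{\alpha}e^{u}=0 \quad (0<r<1), \qquad u'(0)=0,\quad u(1)=0, \] admits at most two turns. That is, with $w$ and $\lambda(t)$ as in the context, $\lambda'(t)$ changes sign at most twice on $(0,\infty)$.
   Context: Here $\lambda>0$ is a parameter. Let $w(t)$ be the solution of the initial value problem \[ w''+\frac{n-1}{t}w'+t^{\alpha}e^{w}=0, \qquad w(0)=0,\quad w'(0)=0 \qquad (t>0). \] This solution is negative and decreasing and is defined for all $t>0$. For each $t>0$, the function $u(r)=w(tr)-w(t)$ solves the boundary value problem with $\lambda=\lambda(t):=t^{\alpha+2}e^{w(t)}$, and all solutions arise in this way. The solution curve is the parametrized curve \[ t\mapsto(\lambda,u(0))=\bigl(t^{\alpha+2}e^{w(t)},\,-w(t)\bigr), \qquad t\in(0,\infty). \] A turn of the curve is a change of sign of $\lambda'(t)$. *)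

From Stdlib Require Import Reals.
From Coquelicot Require Import Coquelicot.
Open Scope R_scope.

Definition gelfand_ivp_solution (n : nat) (alpha : R) (w : R -> R) : Prop :=
  w 0 = 0 /\
  filterlim (fun t => (w t - w 0) / t) (at_right 0) (locally 0) /\
  exists dw : R -> R,
    forall t, 0 < t ->
      is_derive w t (dw t) /\
      is_derive dw t (- ((INR n - 1) / t * dw t + Rpower t alpha * exp (w t))).

Definition lam (alpha : R) (w : R -> R) (t : R) : R :=
  Rpower t (alpha + 2) * exp (w t).

Definition at_most_two_sign_changes (f : R -> R) : Prop :=
  ~ (exists t1 t2 t3 t4 : R,
       0 < t1 /\ t1 < t2 /\ t2 < t3 /\ t3 < t4 /\
       f t1 * f t2 < 0 /\ f t2 * f t3 < 0 /\ f t3 * f t4 < 0).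

(* Write a = alpha + 2, m = n - 2, K = m a, and set
     chi = ln (lambda / K),   psi = t w' + a,   phi = psi + (m/2) chi.
   Since lambda' = lambda psi / t, it suffices to show psi > 0: the curve has in
   fact no turn at all.  The equation gives
     (t^m psi)'     = t^(m-1) (K - lambda),
     (t^(m/2) chi)' = t^(m/2-1) phi,
     (t^(m/2) phi)' = t^(m/2-1) (K (1 - e^chi) + (m^2/4) chi),
   and the last bracket is <= 0 whenever chi <= 0, because n >= 10 + 4 alpha is
   exactly K <= m^2/4.  Near t = 0 we have chi, phi < 0 < psi.  As long as
   chi <= 0, t^(m/2) phi decreases, so phi stays negative and t^(m/2) chi
   decreases: chi never reaches 0.  Hence lambda < K throughout, t^m psi
   increases, and psi > 0. *)

From Stdlib Require Import Reals Lra.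
From Coquelicot Require Import Coquelicot.
Open Scope R_scope.

Lemma Rpower_pos (t k : R) : 0 < Rpower t k.
Proof. apply exp_pos. Qed.

Lemma Rpower_div_pos (t k : R) : 0 < t -> 0 < Rpower t k / t.
Proof. intros Ht. apply Rdiv_lt_0_compat; [apply Rpower_pos | exact Ht]. Qed.

Lemma Rpower_sub_1 (t k : R) : 0 < t -> Rpower t (k - 1) = Rpower t k / t.
Proof.
  intros Ht. unfold Rminus.
  rewrite Rpower_plus, Rpower_Ropp, Rpower_1 by exact Ht. reflexivity.
Qed.

Lemma Rpower_add_2 (t k : R) : 0 < t -> Rpower t (k + 2) = Rpower t k * (t * t).
Proof.
  intros Ht. rewrite Rpower_plus. replace 2 with (INR 2) by (simpl; ring).
  rewrite Rpower_pow by exact Ht. simpl. ring.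
Qed.

Lemma is_derive_Rpower_mul (k : R) (f : R -> R) (t df : R) :
  0 < t -> is_derive f t df ->
  is_derive (fun s => Rpower s k * f s) t (Rpower t k / t * (t * df + k * f t)).
Proof.
  intros Ht Hf.
  replace (Rpower t k / t * (t * df + k * f t))
    with (k * Rpower t (k - 1) * f t + Rpower t k * df)
    by (rewrite Rpower_sub_1 by exact Ht; field; lra).
  apply (is_derive_mult (fun s => Rpower s k) f); [| exact Hf | intros; apply Rmult_comm].
  apply is_derive_Reals, derivable_pt_lim_power, Ht.
Qed.

Lemma is_derive_nonneg_le (f df : R -> R) (p q : R) : p <= q ->
  (forall u, p <= u <= q -> is_derive f u (df u)) ->
  (forall u, p < u < q -> 0 <= df u) -> f p <= f q.
Proof.
  intros Hpq Hd Hs. destruct (Rle_lt_or_eq_dec p q Hpq) as [Hlt | <-]; [| lra].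
  destruct (MVT_cor2 f df p q Hlt) as [c [Hc Hcpq]].
  { intros c Hc. apply is_derive_Reals, Hd, Hc. }
  pose proof (Hs c Hcpq). nra.
Qed.

Lemma is_derive_nonpos_le (f df : R -> R) (p q : R) : p <= q ->
  (forall u, p <= u <= q -> is_derive f u (df u)) ->
  (forall u, p < u < q -> df u <= 0) -> f q <= f p.
Proof.
  intros Hpq Hd Hs.
  enough (- f p <= - f q) by lra.
  eapply (is_derive_nonneg_le (fun u => - f u) (fun u => - df u) p q Hpq).
  - intros u Hu. apply (is_derive_opp f), Hd, Hu.
  - intros u Hu. specialize (Hs u Hu). lra.
Qed.

Lemma exists_first_nonneg (f : R -> R) (p q : R) : p <= q ->
  (forall u, p <= u <= q -> continuous f u) -> 0 <= f q ->
  exists s, p <= s <= q /\ 0 <= f s /\ forall u, p <= u < s -> f u < 0.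
Proof.
  intros Hpq Hc Hq.
  destruct (Rle_lt_dec 0 (f p)) as [Hp | Hp].
  { exists p. split; [lra|]. split; [exact Hp | intros; lra]. }
  set (E u := p <= u <= q /\ forall v, p <= v <= u -> f v < 0).
  assert (HEp : E p) by (split; [lra | intros v Hv; replace v with p by lra; exact Hp]).
  destruct (completeness E) as [s [Hub Hlub]].
  { exists q. intros u Hu. apply Hu. }
  { exists p. exact HEp. }
  assert (Hps : p <= s) by (apply Hub, HEp).
  assert (Hsq : s <= q) by (apply Hlub; intros u Hu; apply Hu).
  assert (Hbelow : forall u, p <= u < s -> f u < 0).
  { intros u Hu. apply Rnot_le_lt. intros Hfu.
    enough (s <= u) by lra.
    apply Hlub. intros v [_ Hv]. apply Rnot_lt_le. intros Huv.
    specialize (Hv u ltac:(lra)). lra. }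
  exists s. split; [lra|]. split; [| exact Hbelow].
  apply Rnot_lt_le. intros Hs.
  assert (Hsq' : s < q) by (destruct (Rle_lt_or_eq_dec s q Hsq) as [| ->]; lra).
  destruct (Hc s (conj Hps Hsq) _ (open_lt 0 (f s) Hs)) as [d Hd].
  set (s' := Rmin q (s + d / 2)).
  assert (Hs' : s < s' <= s + d / 2 /\ s' <= q).
  { pose proof (cond_pos d).
    split; [split; [apply Rmin_glb_lt; lra | apply Rmin_r] | apply Rmin_l]. }
  enough (E s') by (pose proof (Hub s' ltac:(assumption)); lra).
  split; [lra|]. intros v Hv.
  destruct (Rlt_le_dec v s) as [Hvs | Hvs]; [apply Hbelow; lra|].
  apply Hd. change (Rabs (v - s) < d).
  pose proof (cond_pos d). rewrite Rabs_right; lra.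
Qed.

Lemma exists_small_slope (w dw : R -> R) (eps eta : R) :
  w 0 = 0 -> filterlim (fun t => (w t - w 0) / t) (at_right 0) (locally 0) ->
  (forall t, 0 < t -> is_derive w t (dw t)) -> 0 < eps -> 0 < eta ->
  exists xi, 0 < xi < eps /\ Rabs (w xi) < eta /\ Rabs (xi * dw xi) < eta.
Proof.
  intros Hw0 Hlim Hw Heps Heta.
  destruct (proj1 (filterlim_locally _ 0) Hlim (mkposreal 1 Rlt_0_1)) as [d Hd].
  assert (Hsmall : forall y, 0 < y < d -> Rabs (w y) < y).
  { intros y Hy.
    assert (Hq : Rabs ((w y - w 0) / y - 0) < 1).
    { apply Hd; [| lra]. change (Rabs (y - 0) < d). rewrite Rabs_right; lra. }
    rewrite Hw0, Rminus_0_r, Rminus_0_r, Rabs_div, (Rabs_right y) in Hq by lra.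
    apply Rmult_lt_compat_r with (r := y) in Hq; [| lra].
    unfold Rdiv in Hq. rewrite Rmult_assoc, Rinv_l, Rmult_1_r, Rmult_1_l in Hq by lra.
    exact Hq. }
  pose proof (cond_pos d) as Hd0.
  set (y := Rmin (d / 2) (Rmin eps (eta / 3))).
  assert (Hy : 0 < y /\ y <= d / 2 /\ y <= eps /\ y <= eta / 3).
  { unfold y. repeat split.
    - repeat apply Rmin_glb_lt; lra.
    - apply Rmin_l.
    - eapply Rle_trans; [apply Rmin_r | apply Rmin_l].
    - eapply Rle_trans; [apply Rmin_r | apply Rmin_r]. }
  destruct (MVT_cor2 w dw (y / 2) y) as [xi [Hmvt Hxi]];
    [lra | intros c Hc; apply is_derive_Reals, Hw; lra |].
  exists xi. split; [lra|].
  pose proof (Hsmall y ltac:(lra)) as Hwy.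
  pose proof (Hsmall (y / 2) ltac:(lra)) as Hwy2.
  pose proof (Hsmall xi ltac:(lra)) as Hwxi.
  split; [lra|].
  assert (Hdw : Rabs (dw xi) * (y / 2) < 3 / 2 * y).
  { replace (y / 2) with (Rabs (y - y / 2)) by (rewrite Rabs_right; lra).
    rewrite <- Rabs_mult, <- Hmvt.
    pose proof (Rabs_triang (w y) (- w (y / 2))) as Htri.
    rewrite Rabs_Ropp in Htri. unfold Rminus. lra. }
  rewrite Rabs_mult, (Rabs_right xi) by lra.
  nra.
Qed.

Lemma one_sub_exp_mul_add_le (k c x : R) : 0 <= k <= c -> x <= 0 ->
  k * (1 - exp x) + c * x <= 0.
Proof. intros Hkc Hx. pose proof (exp_ineq1_le x). nra. Qed.

Lemma is_derive_lam (alpha : R) (w : R -> R) (t dwt : R) :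
  0 < t -> is_derive w t dwt ->
  is_derive (lam alpha w) t (lam alpha w t * (t * dwt + (alpha + 2)) / t).
Proof.
  intros Ht Hw. unfold lam.
  replace (Rpower t (alpha + 2) * exp (w t) * (t * dwt + (alpha + 2)) / t)
    with (Rpower t (alpha + 2) / t * (t * (dwt * exp (w t)) + (alpha + 2) * exp (w t)))
    by (field; lra).
  apply (is_derive_Rpower_mul _ (fun s => exp (w s))); [exact Ht|].
  apply (is_derive_comp exp w t (exp (w t)) dwt); [| exact Hw].
  apply is_derive_Reals, derivable_pt_lim_exp.
Qed.

Section Gelfand_radial.

Variables (N alpha : R) (w dw : R -> R).

Hypothesis ode : forall t, 0 < t ->
  is_derive w t (dw t) /\
  is_derive dw t (- ((N - 1) / t * dw t + Rpower t alpha * exp (w t))).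
Hypothesis alpha_gt : -2 < alpha.
Hypothesis N_large : 4 * (alpha + 2) <= N - 2.

Local Notation a := (alpha + 2).
Local Notation m := (N - 2).
Local Notation K := (m * a).

Definition chi (t : R) : R := a * ln t + w t - ln K.
Definition psi (t : R) : R := t * dw t + a.
Definition phi (t : R) : R := psi t + m / 2 * chi t.

Lemma K_pos : 0 < K.
Proof. nra. Qed.

Lemma lam_eq_K_exp_chi t : 0 < t -> lam alpha w t = K * exp (chi t).
Proof.
  intros Ht. pose proof K_pos as HK. unfold lam, chi, Rpower.
  replace (a * ln t + w t - ln K) with (a * ln t + (w t + - ln K)) by ring.
  rewrite !exp_plus, exp_Ropp, exp_ln by exact HK. field. lra.
Qed.

Lemma is_derive_chi t : 0 < t -> is_derive chi t (psi t / t).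
Proof.
  intros Ht. destruct (ode t Ht) as [Hw _]. unfold chi, psi.
  auto_derive; [repeat split; auto; eexists; exact Hw |].
  erewrite is_derive_unique by exact Hw. field. lra.
Qed.

Lemma is_derive_psi t : 0 < t -> is_derive psi t ((K - m * psi t - lam alpha w t) / t).
Proof.
  intros Ht. destruct (ode t Ht) as [Hw Hdw]. unfold psi.
  auto_derive; [repeat split; auto; eexists; exact Hdw |].
  erewrite is_derive_unique by exact Hdw.
  unfold lam. rewrite Rpower_add_2 by exact Ht. field. lra.
Qed.

Lemma is_derive_phi t : 0 < t ->
  is_derive phi t ((K - lam alpha w t - m / 2 * psi t) / t).
Proof.
  intros Ht.
  replace ((K - lam alpha w t - m / 2 * psi t) / t)
    with ((K - m * psi t - lam alpha w t) / t + m / 2 * (psi t / t)) by (field; lra).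
  apply (is_derive_plus psi (fun s => m / 2 * chi s)); [now apply is_derive_psi |].
  apply (is_derive_scal chi t (m / 2)). now apply is_derive_chi.
Qed.

Lemma is_derive_weighted_psi t : 0 < t ->
  is_derive (fun s => Rpower s m * psi s) t (Rpower t m / t * (K - lam alpha w t)).
Proof.
  intros Ht.
  replace (K - lam alpha w t) with (t * ((K - m * psi t - lam alpha w t) / t) + m * psi t)
    by (field; lra).
  apply is_derive_Rpower_mul, is_derive_psi; exact Ht.
Qed.

Lemma is_derive_weighted_chi t : 0 < t ->
  is_derive (fun s => Rpower s (m / 2) * chi s) t (Rpower t (m / 2) / t * phi t).
Proof.
  intros Ht. replace (phi t) with (t * (psi t / t) + m / 2 * chi t)
    by (unfold phi; field; lra).
  apply is_derive_Rpower_mul, is_derive_chi; exact Ht.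
Qed.

Lemma is_derive_weighted_phi t : 0 < t ->
  is_derive (fun s => Rpower s (m / 2) * phi s) t
    (Rpower t (m / 2) / t * (K * (1 - exp (chi t)) + m * m / 4 * chi t)).
Proof.
  intros Ht.
  replace (K * (1 - exp (chi t)) + m * m / 4 * chi t)
    with (t * ((K - lam alpha w t - m / 2 * psi t) / t) + m / 2 * phi t)
    by (rewrite lam_eq_K_exp_chi by exact Ht; unfold phi; field; lra).
  apply is_derive_Rpower_mul, is_derive_phi; exact Ht.
Qed.

Lemma chi_neg_after t0 : 0 < t0 -> chi t0 < 0 -> phi t0 < 0 ->
  forall t, t0 <= t -> chi t < 0.
Proof.
  intros Ht0 Hchi0 Hphi0 t Ht. apply Rnot_le_lt. intros Hchit.
  destruct (exists_first_nonneg chi t0 t Ht) as [s [Hs [Hchis Hbelow]]];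
    [| exact Hchit |].
  { intros u Hu. apply (ex_derive_continuous chi). eexists. apply is_derive_chi. lra. }
  assert (Hts : t0 < s) by (destruct (Rle_lt_or_eq_dec t0 s (proj1 Hs)) as [| <-]; lra).
  assert (HKm : 0 <= K <= m * m / 4) by (pose proof K_pos; split; nra).
  assert (Hphi : forall v, t0 <= v < s -> phi v < 0).
  { intros v Hv.
    assert (Hdecr : Rpower v (m / 2) * phi v <= Rpower t0 (m / 2) * phi t0).
    { eapply (is_derive_nonpos_le (fun u => Rpower u (m / 2) * phi u) _ t0 v (proj1 Hv));
        [intros u Hu; apply is_derive_weighted_phi; lra |].
      intros u Hu. pose proof (Rpower_div_pos u (m / 2) ltac:(lra)).
      pose proof (one_sub_exp_mul_add_le K (m * m / 4) (chi u) HKm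
                    (Rlt_le _ _ (Hbelow u ltac:(lra)))).
      nra. }
    pose proof (Rpower_pos v (m / 2)). pose proof (Rpower_pos t0 (m / 2)). nra. }
  assert (Hdecr : Rpower s (m / 2) * chi s <= Rpower t0 (m / 2) * chi t0).
  { eapply (is_derive_nonpos_le (fun u => Rpower u (m / 2) * chi u) _ t0 s (Rlt_le _ _ Hts));
      [intros u Hu; apply is_derive_weighted_chi; lra |].
    intros u Hu. pose proof (Rpower_div_pos u (m / 2) ltac:(lra)).
    pose proof (Hphi u ltac:(lra)). nra. }
  pose proof (Rpower_pos s (m / 2)). pose proof (Rpower_pos t0 (m / 2)). nra.
Qed.

Lemma psi_pos_after t0 : 0 < t0 -> chi t0 < 0 -> phi t0 < 0 -> 0 < psi t0 ->
  forall t, t0 <= t -> 0 < psi t.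
Proof.
  intros Ht0 Hchi0 Hphi0 Hpsi0 t Ht.
  assert (Hincr : Rpower t0 m * psi t0 <= Rpower t m * psi t).
  { eapply (is_derive_nonneg_le (fun u => Rpower u m * psi u) _ t0 t Ht);
      [intros u Hu; apply is_derive_weighted_psi; lra |].
    intros u Hu. apply Rmult_le_pos; [apply Rlt_le, Rpower_div_pos; lra |].
    rewrite lam_eq_K_exp_chi by lra.
    pose proof K_pos.
    pose proof (exp_increasing _ _ (chi_neg_after t0 Ht0 Hchi0 Hphi0 u ltac:(lra))).
    rewrite exp_0 in *. nra. }
  pose proof (Rpower_pos t m). pose proof (Rpower_pos t0 m). nra.
Qed.

Hypothesis w_0 : w 0 = 0.
Hypothesis w_slope_0 : filterlim (fun t => (w t - w 0) / t) (at_right 0) (locally 0).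

Lemma exists_start t1 : 0 < t1 ->
  exists t0, 0 < t0 < t1 /\ chi t0 < 0 /\ phi t0 < 0 /\ 0 < psi t0.
Proof.
  intros Ht1. pose proof K_pos as HK.
  assert (Hm : 0 < m) by lra.
  (* [ln xi < B] forces [chi xi < -4a/m], and then [phi xi < 0] since [psi xi < 2a]. *)
  set (B := (ln K - a - 4 * a / m) / a).
  destruct (exists_small_slope w dw (Rmin t1 (exp B)) a w_0 w_slope_0)
    as [xi [Hxi [Hw Hdw]]].
  - intros t Ht. apply ode, Ht.
  - apply Rmin_glb_lt; [exact Ht1 | apply exp_pos].
  - lra.
  - assert (Hxi1 : xi < t1) by (pose proof (Rmin_l t1 (exp B)); lra).
    assert (HlnB : ln xi < B).
    { rewrite <- (ln_exp B). apply ln_increasing; [lra|].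
      pose proof (Rmin_r t1 (exp B)). lra. }
    assert (Hchi : chi xi < - (4 * a / m)).
    { unfold chi. apply Rabs_def2 in Hw.
      assert (a * ln xi < a * B) by (apply Rmult_lt_compat_l; lra).
      replace (a * B) with (ln K - a - 4 * a / m) in * by (unfold B; field; lra).
      lra. }
    assert (H4am : 0 < 4 * a / m) by (apply Rdiv_lt_0_compat; lra).
    apply Rabs_def2 in Hdw.
    exists xi. split; [lra|]. split; [lra|].
    unfold phi, psi. split; [| lra].
    assert (m / 2 * chi xi < m / 2 * - (4 * a / m)) by (apply Rmult_lt_compat_l; lra).
    replace (m / 2 * - (4 * a / m)) with (- (2 * a)) in * by (field; lra).
    lra.
Qed.

Lemma psi_pos t : 0 < t -> 0 < psi t.
Proof.
  intros Ht.
  destruct (exists_start t Ht) as [t0 [Ht0 [Hchi0 [Hphi0 Hpsi0]]]].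
  apply (psi_pos_after t0); lra.
Qed.

Lemma Derive_lam_pos t : 0 < t -> 0 < Derive (lam alpha w) t.
Proof.
  intros Ht. destruct (ode t Ht) as [Hw _].
  rewrite (is_derive_unique _ _ _ (is_derive_lam alpha w t (dw t) Ht Hw)).
  apply Rdiv_lt_0_compat; [| exact Ht].
  apply Rmult_lt_0_compat; [apply Rmult_lt_0_compat; [apply Rpower_pos | apply exp_pos] |].
  apply psi_pos, Ht.
Qed.

End Gelfand_radial.

Theorem theorem3p2 (alpha : R) (n : nat) (w : R -> R) :
  0 < alpha ->
  10 + 4 * alpha <= INR n ->
  gelfand_ivp_solution n alpha w ->
  at_most_two_sign_changes (Derive (lam alpha w)).
Proof.
  intros Halpha Hn [Hw0 [Hslope [dw Hode]]] [t1 [t2 [_ [_ [Ht1 [Ht12 [_ [_ [Hsign _]]]]]]]]].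
  assert (Hpos : forall t, 0 < t -> 0 < Derive (lam alpha w) t).
  { intros t Ht. apply (Derive_lam_pos (INR n) alpha w dw); auto; lra. }
  pose proof (Hpos t1 Ht1). pose proof (Hpos t2 ltac:(lra)). nra.
Qed.
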